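(* The map $[0,\infty)\to\mathbb R$, $r\mapsto\sqrt{r\tanh(r)}$, is concave and possesses an extension $F:\mathbb R\to\mathbb R$ which is analytic, increasing and odd, such that $F'$ does not vanish on $\mathbb R$ and $F''$ vanishes only at the origin, where it has a simple zero. *)

From Stdlib Require Import Reals Lra.
From Coquelicot Require Import Coquelicot.
Open Scope R_scope.

Definition real_analytic (f : R -> R) : Prop :=
  forall x0 : R, exists (a : nat -> R) (delta : R), 0 < delta /\
    forall y : R, Rabs (y - x0) < delta -> is_pseries a (y - x0) (f y).

Definition concave_on (D : R -> Prop) (f : R -> R) : Prop :=
  forall x y t : R, D x -> D y -> 0 <= t <= 1 ->
    t * f x + (1 - t) * f y <= f (t * x + (1 - t) * y).

Definition g (r : R) : R := sqrt (r * tanh r).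

From Stdlib Require Import Reals Lra Lia Psatz.
From Coquelicot Require Import Coquelicot.
Open Scope R_scope.

(* F y = y * sqrt (tanh y / y) is odd and extends g. The function tanh y / y, i.e.
   ((exp (2 y) - 1) / y) / (exp (2 y) + 1), is analytic and positive, so F is analytic:
   power series with geometrically bounded coefficients are closed under sums, products,
   inverses and square roots, the last two by majorant estimates on the recurrences
   defining the coefficients.  For y > 0 we have F = sqrt P with P y = y tanh y, hence
   F' = P' / (2 sqrt P) > 0 and F'' = (2 P P'' - P'^2) / (4 P sqrt P) < 0.  Oddness carries
   these signs over to y < 0, and the expansion F y = y - y^3 / 6 + ... settles y = 0.
   Monotonicity and concavity on [0, oo) then follow from the mean value theorem. *)

(** * Finite sums and strong recursion *)

Definition PS_nonconst (a : nat -> R) (k : nat) : R :=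
  match k with O => 0 | S _ => a k end.

Lemma sum_f_R0_split_first a b n :
  sum_f_R0 (fun k => a k * b k) n =
  a 0%nat * b 0%nat + sum_f_R0 (fun k => PS_nonconst a k * b k) n.
Proof. induction n as [|n IH]; simpl; [ring | rewrite IH; ring]. Qed.

Lemma sum_f_R0_rev f n : sum_f_R0 (fun k => f (n - k)%nat) n = sum_f_R0 f n.
Proof.
  induction n as [|n IH]; [reflexivity|].
  rewrite decomp_sum by lia. simpl pred.
  rewrite (sum_eq _ (fun i => f (n - i)%nat)) by (intros; f_equal; lia).
  rewrite IH, Nat.sub_0_r. simpl. ring.
Qed.

Lemma sum_f_R0_split_last a b n :
  sum_f_R0 (fun k => b k * a (n - k)%nat) n =
  b n * a 0%nat + sum_f_R0 (fun k => b k * PS_nonconst a (n - k)%nat) n.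
Proof.
  assert (Hrev : forall c : nat -> R,
    sum_f_R0 (fun k => b k * c (n - k)%nat) n = sum_f_R0 (fun k => c k * b (n - k)%nat) n).
  { intro c. rewrite <- sum_f_R0_rev. apply sum_eq. intros i Hi.
    replace (n - (n - i))%nat with i by lia. ring. }
  rewrite !Hrev, sum_f_R0_split_first, Nat.sub_0_r. ring.
Qed.

Definition causal (step : nat -> (nat -> R) -> R) : Prop :=
  forall n p q, (forall k, (k < n)%nat -> p k = q k) -> step n p = step n q.

(* [strong_rec step m] tabulates the first [m + 1] values of the sequence
   [u n = step n u]; [step n] may only look at the values below [n]. *)
Fixpoint strong_rec (step : nat -> (nat -> R) -> R) (m : nat) : nat -> R :=
  match m with
  | O => fun _ => step O (fun _ => 0)
  | S m' => fun k => if Nat.leb k m' then strong_rec step m' k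
                     else step m (strong_rec step m')
  end.

Definition seq_rec (step : nat -> (nat -> R) -> R) (n : nat) : R := strong_rec step n n.

Lemma strong_rec_last step m : strong_rec step (S m) (S m) = step (S m) (strong_rec step m).
Proof. cbn [strong_rec]. rewrite (proj2 (Nat.leb_gt (S m) m)) by lia. reflexivity. Qed.

Lemma strong_rec_seq_rec step m k : (k <= m)%nat -> strong_rec step m k = seq_rec step k.
Proof.
  induction m as [|m IH]; intros Hk.
  - replace k with 0%nat by lia. reflexivity.
  - cbn [strong_rec]. destruct (Nat.leb k m) eqn:E.
    + apply IH, Nat.leb_le, E.
    + apply Nat.leb_gt in E. replace k with (S m) by lia.
      unfold seq_rec. rewrite strong_rec_last. reflexivity.
Qed.

Lemma seq_rec_eq step : causal step -> forall n, seq_rec step n = step n (seq_rec step).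
Proof.
  intros Hstep [|n].
  - apply Hstep. lia.
  - unfold seq_rec at 1. rewrite strong_rec_last.
    apply Hstep. intros k Hk. apply strong_rec_seq_rec. lia.
Qed.

(** * Power series with geometrically bounded coefficients *)

Definition pseries_rep (f : R -> R) (x0 : R) (a : nat -> R) : Prop :=
  exists M K : R, 0 < K /\ (forall n, Rabs (a n) <= M * K ^ n) /\
    forall y, Rabs (y - x0) < / K -> f y = PSeries a (y - x0).

Definition analytic_at (f : R -> R) (x0 : R) : Prop := exists a, pseries_rep f x0 a.

Lemma geom_bound_nonneg (a : nat -> R) M K :
  (forall n, Rabs (a n) <= M * K ^ n) -> 0 <= M.
Proof. intros H. specialize (H 0%nat). simpl in H. pose proof (Rabs_pos (a 0%nat)). lra. Qed.

Lemma CV_radius_geom_bound (a : nat -> R) M K : 0 < K ->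
  (forall n, Rabs (a n) <= M * K ^ n) ->
  forall x, Rabs x < / K -> Rbar_lt (Rabs x) (CV_radius a).
Proof.
  intros HK Hb x Hx.
  pose proof (geom_bound_nonneg _ _ _ Hb) as HM.
  set (y := (Rabs x + / K) / 2).
  assert (Hy : Rabs x < y < / K) by (unfold y; lra).
  assert (HKy : 0 <= K * y <= 1).
  { pose proof (Rabs_pos x). split; [nra|].
    apply Rlt_le. rewrite <- (Rinv_r K) by lra. apply Rmult_lt_compat_l; lra. }
  assert (Hub : Rbar_le y (CV_radius a)).
  { apply (proj1 (CV_radius_bounded a)). exists M. intro n.
    rewrite Rabs_mult, <- RPow_abs, (Rabs_pos_eq y) by (pose proof (Rabs_pos x); lra).
    apply Rle_trans with (M * (K * y) ^ n).
    - rewrite Rpow_mult_distr, <- Rmult_assoc.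
      apply Rmult_le_compat_r; [apply pow_le; pose proof (Rabs_pos x); lra | apply Hb].
    - rewrite <- (Rmult_1_r M) at 2. apply Rmult_le_compat_l; [lra|].
      rewrite <- (pow1 n). apply pow_incr. lra. }
  destruct (CV_radius a) as [r| |]; simpl in *; lra.
Qed.

Lemma pseries_rep_intro f x0 a M K d : 0 < K -> 0 < d ->
  (forall n, Rabs (a n) <= M * K ^ n) ->
  (forall y, Rabs (y - x0) < d -> f y = PSeries a (y - x0)) -> pseries_rep f x0 a.
Proof.
  intros HK Hd Hb He. pose proof (geom_bound_nonneg _ _ _ Hb) as HM.
  pose proof (Rinv_0_lt_compat d Hd) as Hd'.
  exists M, (K + / d). repeat split; [lra| |].
  - intro n. apply Rle_trans with (1 := Hb n).
    apply Rmult_le_compat_l; [lra|]. apply pow_incr. lra.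
  - intros y Hy. apply He. apply Rlt_le_trans with (1 := Hy).
    rewrite <- (Rinv_inv d) at 2. apply Rinv_le_contravar; lra.
Qed.

Lemma pseries_rep_ext_loc f g x0 a d : 0 < d ->
  (forall y, Rabs (y - x0) < d -> f y = g y) -> pseries_rep f x0 a -> pseries_rep g x0 a.
Proof.
  intros Hd He [M [K [HK [Hb Hf]]]].
  apply pseries_rep_intro with M K (Rmin d (/ K)); auto.
  - apply Rmin_pos; auto. apply Rinv_0_lt_compat; auto.
  - intros y Hy. rewrite <- He, Hf; auto.
    + apply Rlt_le_trans with (1 := Hy), Rmin_r.
    + apply Rlt_le_trans with (1 := Hy), Rmin_l.
Qed.

Lemma pseries_rep_center f x0 a : pseries_rep f x0 a -> f x0 = a 0%nat.
Proof.
  intros [M [K [HK [_ Hf]]]]. rewrite Hf, Rminus_diag, PSeries_0; [reflexivity|].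
  rewrite Rminus_diag, Rabs_R0. apply Rinv_0_lt_compat, HK.
Qed.

Lemma real_analytic_intro f : (forall x0, analytic_at f x0) -> real_analytic f.
Proof.
  intros H x0. destruct (H x0) as [a [M [K [HK [Hb Hf]]]]].
  exists a, (/ K). split; [apply Rinv_0_lt_compat, HK|].
  intros y Hy. rewrite Hf by auto. apply PSeries_correct, CV_radius_inside.
  apply CV_radius_geom_bound with M K; auto.
Qed.

Lemma pseries_rep_Derive_n f x0 a : pseries_rep f x0 a ->
  forall n, ex_derive_n f n x0 /\ Derive_n f n x0 = a n * INR (Factorial.fact n).
Proof.
  intros [M [K [HK [Hb Hf]]]] n.
  assert (Hrad : Rbar_lt (Rabs 0) (CV_radius a)).
  { apply CV_radius_geom_bound with M K; auto.
    rewrite Rabs_R0. apply Rinv_0_lt_compat, HK. }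
  assert (Hloc : locally 0 (fun h => PSeries a h = f (h + x0))).
  { exists (mkposreal _ (Rinv_0_lt_compat K HK)). intros h Hh.
    simpl in h, Hh. change (Rabs (h - 0) < / K) in Hh. rewrite Rminus_0_r in Hh.
    rewrite Hf; replace (h + x0 - x0) with h by ring; easy. }
  split.
  - apply ex_derive_n_ext with (fun y => (fun h => f (h + x0)) (y + - x0)).
    { intro y. cbv beta. now rewrite Rplus_assoc, Rplus_opp_l, Rplus_0_r. }
    apply (ex_derive_n_comp_trans (fun h => f (h + x0)) n x0 (- x0)).
    rewrite Rplus_opp_r.
    apply ex_derive_n_ext_loc with (1 := Hloc). apply ex_derive_n_PSeries, Hrad.
  - pose proof (Derive_n_comp_trans f n 0 x0) as Htrans. rewrite Rplus_0_l in Htrans.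
    rewrite <- Htrans, <- Derive_n_coef by (rewrite Rabs_R0 in Hrad; exact Hrad).
    symmetry. apply Derive_n_ext_loc, Hloc.
Qed.

Definition PS_const (c : R) (n : nat) : R := match n with O => c | S _ => 0 end.

Definition PS_id (x0 : R) (n : nat) : R :=
  match n with O => x0 | 1%nat => 1 | _ => 0 end.

Lemma PS_const_geom_bound c K n : 0 < K -> Rabs (PS_const c n) <= Rabs c * K ^ n.
Proof.
  intros HK. destruct n; [simpl; lra|].
  unfold PS_const. rewrite Rabs_R0. apply Rmult_le_pos; [apply Rabs_pos | apply pow_le; lra].
Qed.

Lemma PSeries_const c h : PSeries (PS_const c) h = c.
Proof.
  rewrite (PSeries_decr_n _ 0), (PSeries_ext _ (fun _ => 0)), PSeries_const_0.
  - simpl. ring.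
  - reflexivity.
  - apply CV_radius_inside, CV_radius_geom_bound with (Rabs c) (/ (Rabs h + 1)).
    + apply Rinv_0_lt_compat. pose proof (Rabs_pos h). lra.
    + intro n. apply PS_const_geom_bound. apply Rinv_0_lt_compat. pose proof (Rabs_pos h). lra.
    + rewrite Rinv_inv. lra.
Qed.

Lemma pseries_rep_const c x0 : pseries_rep (fun _ => c) x0 (PS_const c).
Proof.
  apply pseries_rep_intro with (Rabs c) 1 1; try lra.
  - intro n. apply PS_const_geom_bound. lra.
  - intros y _. symmetry. apply PSeries_const.
Qed.

Lemma pseries_rep_id x0 : pseries_rep (fun y => y) x0 (PS_id x0).
Proof.
  assert (Hb : forall n, Rabs (PS_id x0 n) <= (Rabs x0 + 1) * 1 ^ n).
  { intro n. rewrite pow1, Rmult_1_r. pose proof (Rabs_pos x0).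
    destruct n as [|[|n]]; simpl; rewrite ?Rabs_R1, ?Rabs_R0; lra. }
  apply pseries_rep_intro with (Rabs x0 + 1) 1 1; try lra; auto.
  intros y Hy. rewrite (PSeries_decr_n _ 1), (PSeries_ext _ (fun _ => 0)), PSeries_const_0.
  - simpl. ring.
  - reflexivity.
  - apply CV_radius_inside, CV_radius_geom_bound with (Rabs x0 + 1) 1; auto; lra.
Qed.

Lemma pseries_rep_plus f g x0 a b : pseries_rep f x0 a -> pseries_rep g x0 b ->
  pseries_rep (fun y => f y + g y) x0 (PS_plus a b).
Proof.
  intros [M1 [K1 [HK1 [Hb1 Hf]]]] [M2 [K2 [HK2 [Hb2 Hg]]]].
  pose proof (geom_bound_nonneg _ _ _ Hb1). pose proof (geom_bound_nonneg _ _ _ Hb2).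
  assert (Hi1 : / (K1 + K2) <= / K1) by (apply Rinv_le_contravar; lra).
  assert (Hi2 : / (K1 + K2) <= / K2) by (apply Rinv_le_contravar; lra).
  apply pseries_rep_intro with (M1 + M2) (K1 + K2) (/ (K1 + K2));
    [lra | apply Rinv_0_lt_compat; lra | |].
  - intro n. eapply Rle_trans; [apply Rabs_triang|].
    assert (K1 ^ n <= (K1 + K2) ^ n) by (apply pow_incr; lra).
    assert (K2 ^ n <= (K1 + K2) ^ n) by (apply pow_incr; lra).
    specialize (Hb1 n). specialize (Hb2 n). unfold plus; simpl. nra.
  - intros y Hy. rewrite Hf, Hg, PSeries_plus; try reflexivity; try lra; apply CV_radius_inside.
    + apply CV_radius_geom_bound with M1 K1; auto; lra.
    + apply CV_radius_geom_bound with M2 K2; auto; lra.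
Qed.

Lemma INR_S_le_pow2 n : INR (S n) <= 2 ^ n.
Proof.
  induction n as [|n IH]; [simpl; lra|].
  rewrite S_INR. change (2 ^ S n) with (2 * 2 ^ n). pose proof (pow_R1_Rle 2 n). lra.
Qed.

Lemma pseries_rep_mult f g x0 a b : pseries_rep f x0 a -> pseries_rep g x0 b ->
  pseries_rep (fun y => f y * g y) x0 (PS_mult a b).
Proof.
  intros [M1 [K1 [HK1 [Hb1 Hf]]]] [M2 [K2 [HK2 [Hb2 Hg]]]].
  pose proof (geom_bound_nonneg _ _ _ Hb1). pose proof (geom_bound_nonneg _ _ _ Hb2).
  set (K := K1 + K2).
  assert (Hi1 : / (2 * K) <= / K1) by (apply Rinv_le_contravar; unfold K; lra).
  assert (Hi2 : / (2 * K) <= / K2) by (apply Rinv_le_contravar; unfold K; lra).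
  apply pseries_rep_intro with (M1 * M2) (2 * K) (/ (2 * K));
    [unfold K; lra | apply Rinv_0_lt_compat; unfold K; lra | |].
  - intro n. unfold PS_mult. eapply Rle_trans; [apply sum_f_R0_triangle|].
    apply Rle_trans with (sum_f_R0 (fun _ => M1 * M2 * K ^ n) n).
    + apply sum_Rle. intros k Hk. rewrite Rabs_mult.
      assert (Hn : K ^ n = K ^ k * K ^ (n - k)) by (rewrite <- pow_add; f_equal; lia).
      replace (M1 * M2 * K ^ n) with ((M1 * K ^ k) * (M2 * K ^ (n - k))) by (rewrite Hn; ring).
      apply Rmult_le_compat; try apply Rabs_pos.
      * eapply Rle_trans; [apply Hb1|].
        apply Rmult_le_compat_l; auto. apply pow_incr. unfold K; lra.
      * eapply Rle_trans; [apply Hb2|].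
        apply Rmult_le_compat_l; auto. apply pow_incr. unfold K; lra.
    + rewrite sum_cte, Rpow_mult_distr.
      pose proof (INR_S_le_pow2 n).
      assert (0 <= M1 * M2 * K ^ n) by (apply Rmult_le_pos; [nra | apply pow_le; unfold K; lra]).
      nra.
  - intros y Hy. rewrite Hf, Hg, PSeries_mult; try reflexivity; try lra.
    + apply CV_radius_geom_bound with M1 K1; auto; lra.
    + apply CV_radius_geom_bound with M2 K2; auto; lra.
Qed.

(** * Inverses and square roots of power series *)

Definition PS_inv_step (a : nat -> R) (n : nat) (p : nat -> R) : R :=
  match n with
  | O => / a 0%nat
  | S m => - / a 0%nat * sum_f_R0 (fun k => a (S k) * p (m - k)%nat) m
  end.

Definition PS_inv (a : nat -> R) : nat -> R := seq_rec (PS_inv_step a).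

Lemma PS_inv_eq a n : PS_inv a n = PS_inv_step a n (PS_inv a).
Proof.
  apply seq_rec_eq. intros [|m] p q Hpq; [reflexivity|].
  simpl. f_equal. apply sum_eq. intros k Hk. rewrite Hpq by lia. reflexivity.
Qed.

Lemma PS_mult_inv a : a 0%nat <> 0 -> forall n, PS_mult a (PS_inv a) n = PS_const 1 n.
Proof.
  intros Ha [|m]; unfold PS_mult.
  - simpl. rewrite PS_inv_eq. simpl. field. exact Ha.
  - rewrite decomp_sum by lia. simpl pred. rewrite Nat.sub_0_r, (PS_inv_eq a (S m)).
    simpl. field. exact Ha.
Qed.

Lemma sum_half_pow m : sum_f_R0 (fun k => (/ 2) ^ S k) m = 1 - (/ 2) ^ S m.
Proof. induction m as [|m IH]; [simpl; field | rewrite tech5, IH; simpl; field]. Qed.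

Lemma sum_half_pow_bound (u : nat -> R) C m : 0 <= C ->
  (forall k, (k <= m)%nat -> Rabs (u k) <= C * (/ 2) ^ S k) -> Rabs (sum_f_R0 u m) <= C.
Proof.
  intros HC Hu. eapply Rle_trans; [apply sum_f_R0_triangle|].
  eapply Rle_trans; [apply sum_Rle, (fun k Hk => Hu k Hk)|].
  rewrite (sum_eq _ (fun k => (/ 2) ^ S k * C)) by (intros; ring).
  rewrite <- scal_sum, sum_half_pow.
  assert (0 < (/ 2) ^ S m) by (apply pow_lt; lra). nra.
Qed.

Lemma pow_ge_base x k : 1 <= x -> (1 <= k)%nat -> x <= x ^ k.
Proof.
  intros Hx Hk. destruct k as [|k]; [lia|]. simpl.
  pose proof (pow_R1_Rle x k Hx). nra.
Qed.

Lemma PS_inv_geom_bound a M K : 0 < K -> a 0%nat <> 0 -> (forall n, Rabs (a n) <= M * K ^ n) ->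
  forall n, Rabs (PS_inv a n) <= / Rabs (a 0%nat) * (2 * K * (1 + M / Rabs (a 0%nat))) ^ n.
Proof.
  intros HK Ha Hb.
  pose proof (geom_bound_nonneg _ _ _ Hb) as HM.
  set (c := Rabs (a 0%nat)). assert (Hc : 0 < c) by (apply Rabs_pos_lt, Ha).
  set (K' := 1 + M / c).
  assert (HK' : M / c <= K' /\ 1 <= K').
  { assert (0 <= M / c) by (apply Rdiv_le_0_compat; lra). unfold K'. lra. }
  set (L := 2 * K * K'). assert (HL : 0 < L) by (unfold L; nra).
  intro n. induction n as [n IH] using (well_founded_induction Wf_nat.lt_wf).
  rewrite PS_inv_eq. destruct n as [|m].
  - simpl. rewrite Rabs_inv. fold c. lra.
  - simpl PS_inv_step. rewrite Rabs_mult, Rabs_Ropp, Rabs_inv. fold c.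
    apply Rmult_le_compat_l; [apply Rlt_le, Rinv_0_lt_compat, Hc|].
    apply sum_half_pow_bound; [apply pow_le; lra|]. intros k Hk.
    rewrite Rabs_mult.
    apply Rle_trans with ((M * K ^ S k) * (/ c * L ^ (m - k))).
    { apply Rmult_le_compat; try apply Rabs_pos; [apply Hb | apply IH; lia]. }
    assert (Hsplit : L ^ S m * (/ 2) ^ S k = (K * K') ^ S k * L ^ (m - k)).
    { replace (S m) with (S k + (m - k))%nat by lia. rewrite pow_add.
      unfold L. rewrite !Rpow_mult_distr, pow_inv. field. apply pow_nonzero. lra. }
    rewrite Hsplit, Rpow_mult_distr.
    assert (M / c <= K' ^ S k) by (apply Rle_trans with K'; [lra | apply pow_ge_base; lra || lia]).
    assert (0 <= K ^ S k * L ^ (m - k)) by (apply Rmult_le_pos; apply pow_le; lra).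
    replace (M * K ^ S k * (/ c * L ^ (m - k))) with ((M / c) * (K ^ S k * L ^ (m - k)))
      by (unfold Rdiv; ring).
    replace (K ^ S k * K' ^ S k * L ^ (m - k)) with (K' ^ S k * (K ^ S k * L ^ (m - k))) by ring.
    apply Rmult_le_compat_r; auto.
Qed.

Lemma pseries_rep_inv f x0 a : pseries_rep f x0 a -> f x0 <> 0 ->
  pseries_rep (fun y => / f y) x0 (PS_inv a).
Proof.
  intros Hrep Hx. pose proof (pseries_rep_center _ _ _ Hrep) as Ha0. rewrite Ha0 in Hx.
  destruct Hrep as [M [K [HK [Hb Hf]]]].
  pose proof (PS_inv_geom_bound a M K HK Hx Hb) as Hib.
  set (L := 2 * K * (1 + M / Rabs (a 0%nat))) in *.
  assert (HL : 0 < L).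
  { pose proof (geom_bound_nonneg _ _ _ Hb). pose proof (Rabs_pos_lt _ Hx).
    assert (0 <= M / Rabs (a 0%nat)) by (apply Rdiv_le_0_compat; lra). unfold L. nra. }
  apply pseries_rep_intro with (/ Rabs (a 0%nat)) L (Rmin (/ K) (/ L)); auto.
  { apply Rmin_pos; apply Rinv_0_lt_compat; auto. }
  intros y Hy.
  assert (H1 : Rabs (y - x0) < / K) by (eapply Rlt_le_trans; [apply Hy | apply Rmin_l]).
  assert (H2 : Rabs (y - x0) < / L) by (eapply Rlt_le_trans; [apply Hy | apply Rmin_r]).
  assert (E : f y * PSeries (PS_inv a) (y - x0) = 1).
  { rewrite Hf by exact H1. rewrite <- PSeries_mult.
    - rewrite (PSeries_ext _ (PS_const 1)) by (apply PS_mult_inv, Hx). apply PSeries_const.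
    - apply CV_radius_geom_bound with M K; auto.
    - apply CV_radius_geom_bound with (/ Rabs (a 0%nat)) L; auto. }
  assert (f y <> 0) by (intro Hz; rewrite Hz in E; lra).
  apply (Rmult_eq_reg_l (f y)); auto. rewrite E. field. auto.
Qed.

Definition PS_sqrt_step (a : nat -> R) (n : nat) (p : nat -> R) : R :=
  match n with
  | O => sqrt (a 0%nat)
  | S _ => (a n - sum_f_R0 (fun k => PS_nonconst p k * PS_nonconst p (n - k)%nat) n)
           / (2 * sqrt (a 0%nat))
  end.

Definition PS_sqrt (a : nat -> R) : nat -> R := seq_rec (PS_sqrt_step a).

Lemma PS_sqrt_eq a n : PS_sqrt a n = PS_sqrt_step a n (PS_sqrt a).
Proof.
  apply seq_rec_eq. intros [|m] p q Hpq; [reflexivity|].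
  cbv beta iota delta [PS_sqrt_step]. do 2 f_equal. apply sum_eq. intros [|k] Hk; [simpl; ring|].
  destruct (Nat.eq_dec k m) as [->|Hkm].
  - rewrite Nat.sub_diag. simpl. ring.
  - replace (S m - S k)%nat with (S (m - S k)) by lia. simpl. rewrite !Hpq by lia. reflexivity.
Qed.

Lemma PS_mult_sqrt a : 0 < a 0%nat -> forall n, PS_mult (PS_sqrt a) (PS_sqrt a) n = a n.
Proof.
  intros Ha n. pose proof (sqrt_lt_R0 _ Ha) as Hs. unfold PS_mult. destruct n as [|m].
  - simpl. rewrite PS_sqrt_eq. apply sqrt_sqrt. lra.
  - rewrite sum_f_R0_split_first, sum_f_R0_split_last, Nat.sub_0_r.
    change (PS_nonconst (PS_sqrt a) (S m)) with (PS_sqrt a (S m)).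
    rewrite (PS_sqrt_eq a 0), (PS_sqrt_eq a (S m)). cbv beta iota delta [PS_sqrt_step].
    field. lra.
Qed.

Definition invsq (n : nat) : R := / INR (S n) ^ 2.

Lemma INR_S_ge_1 n : 1 <= INR (S n).
Proof. rewrite S_INR. pose proof (pos_INR n). lra. Qed.

Lemma invsq_pos n : 0 < invsq n.
Proof. apply Rinv_0_lt_compat, pow_lt. pose proof (INR_S_ge_1 n). lra. Qed.

Lemma invsq_le_1 n : invsq n <= 1.
Proof.
  pose proof (INR_S_ge_1 n). unfold invsq. rewrite <- Rinv_1.
  apply Rinv_le_contravar; [lra | apply pow_R1_Rle; lra].
Qed.

Lemma pow4_invsq_ge_1 n : 1 <= 4 ^ n * invsq n.
Proof.
  pose proof (INR_S_ge_1 n) as H1. unfold invsq.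
  assert (Hsq : INR (S n) ^ 2 <= 4 ^ n).
  { replace 4 with (2 ^ 2) by ring. rewrite <- pow_mult, Nat.mul_comm, pow_mult.
    apply pow_incr. split; [lra | apply INR_S_le_pow2]. }
  assert (0 < INR (S n) ^ 2) by (apply pow_lt; lra).
  apply (Rmult_le_reg_r (INR (S n) ^ 2)); auto.
  rewrite Rmult_assoc, Rinv_l; lra.
Qed.

Lemma sum_invsq_le n : sum_f_R0 invsq n <= 2 - / INR (S n).
Proof.
  induction n as [|n IH]; [unfold invsq; simpl; lra|].
  rewrite tech5. set (x := INR (S n)) in *.
  assert (Hx : 1 <= x) by apply INR_S_ge_1.
  change (invsq (S n)) with (/ INR (S (S n)) ^ 2).
  replace (INR (S (S n))) with (x + 1) by (unfold x; rewrite (S_INR (S n)); ring).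
  assert (E : / x - / (x + 1) - / (x + 1) ^ 2 = / (x * (x + 1) ^ 2)) by (field; lra).
  assert (0 < / (x * (x + 1) ^ 2))
    by (apply Rinv_0_lt_compat, Rmult_lt_0_compat; [lra | apply pow_lt; lra]).
  lra.
Qed.

Lemma inv_sq_mult_le p q : 0 < p -> 0 < q ->
  / p ^ 2 * / q ^ 2 <= 2 / (p + q) ^ 2 * (/ p ^ 2 + / q ^ 2).
Proof.
  intros Hp Hq.
  assert (E : 2 / (p + q) ^ 2 * (/ p ^ 2 + / q ^ 2) - / p ^ 2 * / q ^ 2
              = (p - q) ^ 2 * / ((p + q) ^ 2 * p ^ 2 * q ^ 2)) by (field; lra).
  assert (0 <= (p - q) ^ 2 * / ((p + q) ^ 2 * p ^ 2 * q ^ 2)).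
  { apply Rmult_le_pos; [apply pow2_ge_0|]. apply Rlt_le, Rinv_0_lt_compat.
    repeat apply Rmult_lt_0_compat; try apply pow_lt; lra. }
  lra.
Qed.

(* The weights [1/(n+1)^2] are, up to a constant, stable under convolution; this is
   what makes them a majorant for the square-root recurrence. *)
Lemma conv_invsq_le n : sum_f_R0 (fun k => invsq k * invsq (n - k)%nat) n <= 8 * invsq n.
Proof.
  set (s := INR (S (S n))).
  assert (Hs : INR (S n) + 1 = s) by (unfold s; rewrite (S_INR (S n)); ring).
  pose proof (INR_S_ge_1 n).
  apply Rle_trans with (sum_f_R0 (fun k => (invsq k + invsq (n - k)%nat) * (2 / s ^ 2)) n).
  - apply sum_Rle. intros k Hk. rewrite (Rmult_comm (invsq k + _)). unfold invsq.
    replace s with (INR (S k) + INR (S (n - k))).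
    + apply inv_sq_mult_le; pose proof (INR_S_ge_1 k); pose proof (INR_S_ge_1 (n - k)); lra.
    + rewrite <- Hs, !S_INR, minus_INR by lia. ring.
  - rewrite <- scal_sum, sum_plus, sum_f_R0_rev.
    pose proof (sum_invsq_le n).
    assert (0 < / INR (S n)) by (apply Rinv_0_lt_compat; lra).
    assert (Hs2 : 0 < s ^ 2) by (apply pow_lt; lra).
    apply Rle_trans with (2 / s ^ 2 * 4).
    + apply Rmult_le_compat_l; [apply Rlt_le, Rdiv_lt_0_compat; lra | lra].
    + unfold invsq. replace (2 / s ^ 2 * 4) with (8 * / s ^ 2) by (field; lra).
      apply Rmult_le_compat_l; [lra|]. apply Rinv_le_contravar; [apply pow_lt; lra|].
      apply pow_incr. lra.
Qed.

Lemma conv_invsq_bound (u : nat -> R) B L n : 0 < L -> u 0%nat = 0 ->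
  (forall k, (k < n)%nat -> Rabs (u k) <= B * L ^ k * invsq k) ->
  Rabs (sum_f_R0 (fun k => u k * u (n - k)%nat) n) <= 8 * B ^ 2 * L ^ n * invsq n.
Proof.
  intros HL Hu0 Hu.
  eapply Rle_trans; [apply sum_f_R0_triangle|].
  apply Rle_trans with (sum_f_R0 (fun k => invsq k * invsq (n - k)%nat * (B ^ 2 * L ^ n)) n).
  - apply sum_Rle. intros k Hk.
    assert (0 <= invsq k * invsq (n - k)%nat * (B ^ 2 * L ^ n)).
    { pose proof (invsq_pos k). pose proof (invsq_pos (n - k)). pose proof (pow_lt L n HL).
      pose proof (pow2_ge_0 B). apply Rmult_le_pos; [nra | nra]. }
    destruct (Nat.eq_dec k 0) as [->|Hk0]; [rewrite Hu0, Rmult_0_l, Rabs_R0; auto|].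
    destruct (Nat.eq_dec k n) as [->|Hkn].
    { rewrite Nat.sub_diag in *. rewrite Hu0, Rmult_0_r, Rabs_R0. auto. }
    rewrite Rabs_mult.
    apply Rle_trans with ((B * L ^ k * invsq k) * (B * L ^ (n - k) * invsq (n - k)%nat)).
    + apply Rmult_le_compat; try apply Rabs_pos; apply Hu; lia.
    + right. assert (E : L ^ n = L ^ k * L ^ (n - k)) by (rewrite <- pow_add; f_equal; lia).
      rewrite E. ring.
  - rewrite <- scal_sum. pose proof (conv_invsq_le n).
    assert (0 <= B ^ 2 * L ^ n) by (apply Rmult_le_pos; [apply pow2_ge_0 | apply pow_le; lra]).
    nra.
Qed.

Lemma geom_le_invsq_majorant M K A n : 0 <= M -> 0 < K -> 0 < A -> (1 <= n)%nat ->
  M * K ^ n <= A / 8 * (4 * K * (1 + 8 * M / A)) ^ n * invsq n.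
Proof.
  intros HM HK HA Hn.
  set (K' := 1 + 8 * M / A).
  assert (HK' : 1 <= K').
  { assert (0 <= 8 * M / A) by (apply Rdiv_le_0_compat; lra). unfold K'. lra. }
  assert (HMK : M <= A / 8 * K' ^ n).
  { assert (E : A / 8 * K' = A / 8 + M) by (unfold K'; field; lra).
    apply Rle_trans with (A / 8 * K'); [lra|].
    apply Rmult_le_compat_l; [lra | apply pow_ge_base; auto]. }
  rewrite !Rpow_mult_distr.
  pose proof (pow4_invsq_ge_1 n). pose proof (pow_lt K n HK). pose proof (pow_lt 4 n ltac:(lra)).
  replace (A / 8 * (4 ^ n * K ^ n * K' ^ n) * invsq n)
    with ((A / 8 * K' ^ n) * K ^ n * (4 ^ n * invsq n)) by ring.
  assert (M * K ^ n <= A / 8 * K' ^ n * K ^ n) by (apply Rmult_le_compat_r; lra).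
  assert (0 <= A / 8 * K' ^ n * K ^ n) by nra.
  nra.
Qed.

Lemma PS_sqrt_geom_bound a M K : 0 < a 0%nat -> 0 < K -> (forall n, Rabs (a n) <= M * K ^ n) ->
  forall n, Rabs (PS_nonconst (PS_sqrt a) n) <=
    sqrt (a 0%nat) / 8 * (4 * K * (1 + 8 * M / a 0%nat)) ^ n * invsq n.
Proof.
  intros Ha HK Hb.
  pose proof (geom_bound_nonneg _ _ _ Hb) as HM.
  set (be := sqrt (a 0%nat)).
  assert (Hbe : 0 < be) by (apply sqrt_lt_R0, Ha).
  assert (Hbe2 : be ^ 2 = a 0%nat) by (unfold be; rewrite <- Rsqr_pow2; apply Rsqr_sqrt; lra).
  set (L := 4 * K * (1 + 8 * M / a 0%nat)).
  assert (HL : 0 < L).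
  { assert (0 <= 8 * M / a 0%nat) by (apply Rdiv_le_0_compat; lra). unfold L. nra. }
  intro n. induction n as [n IH] using (well_founded_induction Wf_nat.lt_wf).
  pose proof (invsq_pos n). pose proof (pow_lt L n HL).
  destruct n as [|m]; [simpl; rewrite Rabs_R0; nra|].
  change (PS_nonconst (PS_sqrt a) (S m)) with (PS_sqrt a (S m)).
  rewrite PS_sqrt_eq. cbv beta iota delta [PS_sqrt_step]. fold be.
  set (C := sum_f_R0 _ (S m)).
  set (X := L ^ S m * invsq (S m)).
  assert (HC : Rabs C <= be ^ 2 / 8 * X).
  { apply Rle_trans with (8 * (be / 8) ^ 2 * L ^ S m * invsq (S m)).
    - apply conv_invsq_bound; auto.
    - unfold X. apply Req_le. field. }
  assert (HA : Rabs (a (S m)) <= be ^ 2 / 8 * X).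
  { eapply Rle_trans; [apply Hb|]. rewrite Hbe2. unfold X. rewrite <- Rmult_assoc.
    apply geom_le_invsq_majorant; auto; lia. }
  unfold Rdiv. rewrite Rabs_mult, Rabs_inv, (Rabs_pos_eq (2 * be)) by lra.
  apply (Rmult_le_reg_r (2 * be)); [lra|].
  rewrite Rmult_assoc, Rinv_l, Rmult_1_r by lra.
  eapply Rle_trans; [apply Rabs_triang|]. rewrite Rabs_Ropp.
  apply Rle_trans with (be ^ 2 / 4 * X); [lra|].
  apply Req_le. unfold X. field.
Qed.

Lemma PS_sqrt_geom_bound_all a M K : 0 < a 0%nat -> 0 < K ->
  (forall n, Rabs (a n) <= M * K ^ n) ->
  forall n, Rabs (PS_sqrt a n) <= 9 / 8 * sqrt (a 0%nat) * (4 * K * (1 + 8 * M / a 0%nat)) ^ n.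
Proof.
  intros Ha HK Hb n. pose proof (sqrt_lt_R0 _ Ha) as Hbe.
  assert (HL : 0 < 4 * K * (1 + 8 * M / a 0%nat)).
  { pose proof (geom_bound_nonneg _ _ _ Hb).
    assert (0 <= 8 * M / a 0%nat) by (apply Rdiv_le_0_compat; lra). nra. }
  pose proof (pow_lt _ n HL).
  destruct n as [|n].
  - rewrite PS_sqrt_eq. simpl. rewrite Rabs_pos_eq; lra.
  - change (PS_sqrt a (S n)) with (PS_nonconst (PS_sqrt a) (S n)).
    set (L := 4 * K * (1 + 8 * M / a 0%nat)) in *.
    apply Rle_trans with (sqrt (a 0%nat) / 8 * L ^ S n * invsq (S n));
      [apply PS_sqrt_geom_bound; auto|].
    pose proof (invsq_le_1 (S n)). pose proof (invsq_pos (S n)).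
    apply Rle_trans with (sqrt (a 0%nat) / 8 * L ^ S n * 1); [apply Rmult_le_compat_l; nra | nra].
Qed.

Lemma PSeries_pos_near_0 (a : nat -> R) : Rbar_lt 0 (CV_radius a) -> 0 < a 0%nat ->
  exists del, 0 < del /\ forall h, Rabs h < del -> 0 < PSeries a h.
Proof.
  intros Hrad Ha.
  assert (Hcont : continuity_pt (PSeries a) 0)
    by (apply PSeries_continuity; rewrite Rabs_R0; exact Hrad).
  destruct (Hcont (a 0%nat) Ha) as [del [Hdel Hnear]].
  simpl in Hnear. rewrite PSeries_0 in Hnear.
  exists del. split; [exact Hdel|]. intros h Hh.
  destruct (Req_dec h 0) as [->|Hz]; [rewrite PSeries_0; exact Ha|].
  assert (Hd : Rabs (PSeries a h - a 0%nat) < a 0%nat).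
  { apply Hnear. split; [split; [exact I | auto] | unfold R_dist; rewrite Rminus_0_r; auto]. }
  apply Rabs_def2 in Hd. lra.
Qed.

Lemma pseries_rep_sqrt f x0 a : pseries_rep f x0 a -> 0 < f x0 ->
  pseries_rep (fun y => sqrt (f y)) x0 (PS_sqrt a).
Proof.
  intros Hrep Hx. pose proof (pseries_rep_center _ _ _ Hrep) as Ha0. rewrite Ha0 in Hx.
  destruct Hrep as [M [K [HK [Hb Hf]]]].
  pose proof (PS_sqrt_geom_bound_all a M K Hx HK Hb) as Hbs.
  set (s := PS_sqrt a) in *. set (L := 4 * K * (1 + 8 * M / a 0%nat)) in *.
  assert (HL : 0 < L).
  { pose proof (geom_bound_nonneg _ _ _ Hb).
    assert (0 <= 8 * M / a 0%nat) by (apply Rdiv_le_0_compat; lra). unfold L. nra. }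
  assert (Hrad : forall h, Rabs h < / L -> Rbar_lt (Rabs h) (CV_radius s))
    by (apply CV_radius_geom_bound with (9 / 8 * sqrt (a 0%nat)); auto).
  destruct (PSeries_pos_near_0 s) as [del [Hdel Hpos]].
  { rewrite <- Rabs_R0. apply Hrad. rewrite Rabs_R0. apply Rinv_0_lt_compat, HL. }
  { unfold s. rewrite PS_sqrt_eq. apply sqrt_lt_R0, Hx. }
  apply pseries_rep_intro with (9 / 8 * sqrt (a 0%nat)) L (Rmin (Rmin (/ K) (/ L)) del); auto.
  { repeat apply Rmin_pos; auto; apply Rinv_0_lt_compat; auto. }
  intros y Hy.
  pose proof (Rmin_l (Rmin (/ K) (/ L)) del). pose proof (Rmin_r (Rmin (/ K) (/ L)) del).
  pose proof (Rmin_l (/ K) (/ L)). pose proof (Rmin_r (/ K) (/ L)).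
  assert (Rabs (y - x0) < / K /\ Rabs (y - x0) < / L /\ Rabs (y - x0) < del)
    as (? & ? & ?) by lra.
  assert (E : f y = PSeries s (y - x0) * PSeries s (y - x0)).
  { rewrite Hf, <- PSeries_mult by auto. apply PSeries_ext.
    intro n. symmetry. apply PS_mult_sqrt, Hx. }
  rewrite E. apply sqrt_square, Rlt_le, Hpos. auto.
Qed.

(** * Calculus on the real line *)

Lemma Derive_n_odd f n x : (forall y, f (- y) = - f y) -> (forall k y, ex_derive_n f k y) ->
  Derive_n f n (- x) = - (-1) ^ n * Derive_n f n x.
Proof.
  intros Hodd Hsmooth.
  rewrite (Derive_n_ext f (fun y => - f (- y))) by (intro y; rewrite Hodd; ring).
  rewrite Derive_n_opp, Derive_n_comp_opp, Ropp_involutive; [ring|].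
  apply filter_forall. intros y k _. apply Hsmooth.
Qed.

Lemma MVT_Derive f u v : u <= v -> (forall w, u <= w <= v -> ex_derive f w) ->
  exists c, u <= c <= v /\ f v - f u = Derive f c * (v - u).
Proof.
  intros Huv Hf. destruct (MVT_gen f u v (Derive f)) as [c [Hc E]].
  - intros w Hw. rewrite Rmin_left, Rmax_right in Hw by lra. apply Derive_correct, Hf. lra.
  - intros w Hw. rewrite Rmin_left, Rmax_right in Hw by lra.
    apply derivable_continuous_pt, ex_derive_Reals_0, Hf. lra.
  - rewrite Rmin_left, Rmax_right in Hc by lra. eauto.
Qed.

Lemma increasing_of_Derive_pos f : (forall x, ex_derive f x) -> (forall x, 0 < Derive f x) ->
  forall x y, x < y -> f x < f y.
Proof.
  intros Hf Hpos x y Hxy.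
  destruct (MVT_Derive f x y) as [c [_ Hc]]; [lra | auto |].
  pose proof (Hpos c). nra.
Qed.

Lemma nonincreasing_of_Derive_nonpos f a : (forall x, a <= x -> ex_derive f x) ->
  (forall x, a <= x -> Derive f x <= 0) -> forall x y, a <= x -> x <= y -> f y <= f x.
Proof.
  intros Hf Hneg x y Hax Hxy.
  destruct (MVT_Derive f x y) as [c [Hc E]]; [lra | intros w Hw; apply Hf; lra |].
  pose proof (Hneg c ltac:(lra)). nra.
Qed.

Lemma concave_of_Derive_nonincreasing f a : (forall x, a <= x -> ex_derive f x) ->
  (forall x y, a <= x -> x <= y -> Derive f y <= Derive f x) -> concave_on (fun r => a <= r) f.
Proof.
  intros Hf Hmono.
  assert (Hle : forall x y t, a <= x -> x <= y -> 0 <= t <= 1 ->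
            t * f x + (1 - t) * f y <= f (t * x + (1 - t) * y)).
  { intros x y t Hx Hxy Ht. set (z := t * x + (1 - t) * y).
    assert (Hz : x <= z <= y) by (unfold z; split; nra).
    destruct (MVT_Derive f x z) as [c1 [Hc1 E1]]; [lra | intros w Hw; apply Hf; lra |].
    destruct (MVT_Derive f z y) as [c2 [Hc2 E2]]; [lra | intros w Hw; apply Hf; lra |].
    assert (Derive f c2 <= Derive f c1) by (apply Hmono; lra).
    assert (Hgap : f z - (t * f x + (1 - t) * f y) =
                   t * (1 - t) * (y - x) * (Derive f c1 - Derive f c2)).
    { replace (f x) with (f z - Derive f c1 * (z - x)) by lra.
      replace (f y) with (f z + Derive f c2 * (y - z)) by lra.
      unfold z. ring. }
    assert (0 <= t * (1 - t) * (y - x)) by (apply Rmult_le_pos; nra).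
    nra. }
  intros x y t Hx Hy Ht. destruct (Rle_dec x y) as [Hxy|Hxy]; [apply Hle; auto|].
  replace (t * x + (1 - t) * y) with ((1 - t) * y + (1 - (1 - t)) * x) by ring.
  replace (t * f x + (1 - t) * f y) with ((1 - t) * f y + (1 - (1 - t)) * f x) by ring.
  apply Hle; lra.
Qed.

Lemma is_derive_sqrt_deriv (P P1 : R -> R) y p2 :
  is_derive P y (P1 y) -> is_derive P1 y p2 -> 0 < P y ->
  is_derive (fun t => P1 t / (2 * sqrt (P t))) y
    ((2 * P y * p2 - P1 y ^ 2) / (4 * P y * sqrt (P y))).
Proof.
  intros HP HP1 Hpos. pose proof (sqrt_lt_R0 _ Hpos) as Hs.
  assert (Hss : sqrt (P y) * sqrt (P y) = P y) by (apply sqrt_sqrt; lra).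
  replace ((2 * P y * p2 - P1 y ^ 2) / (4 * P y * sqrt (P y))) with
    ((p2 * (2 * sqrt (P y)) - P1 y * (2 * (P1 y / (2 * sqrt (P y))))) / (2 * sqrt (P y)) ^ 2).
  - apply (is_derive_div P1 (fun t => 2 * sqrt (P t))); [exact HP1| |lra].
    apply (is_derive_scal (fun t => sqrt (P t))), is_derive_sqrt; auto.
  - set (s := sqrt (P y)) in *. rewrite <- Hss. field. lra.
Qed.

(** * The odd analytic extension [F] of [g] *)

Definition exp2_coef (n : nat) : R := 2 ^ n / INR (Factorial.fact n).

(* (exp (2 y) - 1) / y, continued by 2 at y = 0 *)
Definition exp2m1_quot (y : R) : R := PSeries (fun n => exp2_coef (S n)) y.

Definition tanhc (y : R) : R := exp2m1_quot y / (exp (2 * y) + 1).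

Definition F (y : R) : R := y * sqrt (tanhc y).

Lemma is_pseries_exp2 y : is_pseries exp2_coef y (exp (2 * y)).
Proof.
  eapply is_series_ext; [|apply (is_exp_Reals (2 * y))]. intro n.
  rewrite pow_n_pow. unfold scal; simpl; unfold mult; simpl. unfold exp2_coef.
  rewrite Rpow_mult_distr. pose proof (INR_fact_lt_0 n). field. lra.
Qed.

Lemma exp2_coef_bound n : Rabs (exp2_coef n) <= 1 * 2 ^ n.
Proof.
  unfold exp2_coef. pose proof (INR_fact_lt_0 n). pose proof (pow_lt 2 n ltac:(lra)).
  assert (1 <= INR (Factorial.fact n)) by (apply (le_INR 1), Nat.le_succ_l, Factorial.lt_O_fact).
  rewrite Rabs_pos_eq by (apply Rlt_le, Rdiv_lt_0_compat; lra).
  apply Rmult_le_reg_r with (INR (Factorial.fact n)); [lra|]. field_simplify; nra.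
Qed.

Lemma exp2m1_quot_spec y : y * exp2m1_quot y = exp (2 * y) - 1.
Proof.
  rewrite <- (is_pseries_unique _ _ _ (is_pseries_exp2 y)), PSeries_decr_1
    by (eexists; apply is_pseries_exp2).
  unfold exp2m1_quot. change (PSeries (PS_decr_1 exp2_coef) y) with
    (PSeries (fun n => exp2_coef (S n)) y).
  replace (exp2_coef 0) with 1 by (unfold exp2_coef; simpl; field). ring.
Qed.

Lemma exp2m1_quot_0 : exp2m1_quot 0 = 2.
Proof. unfold exp2m1_quot. rewrite PSeries_0. unfold exp2_coef. simpl. field. Qed.

Lemma exp2m1_quot_pos y : 0 < exp2m1_quot y.
Proof.
  pose proof (exp2m1_quot_spec y) as Hspec.
  destruct (Rtotal_order y 0) as [Hy|[->|Hy]]; [| rewrite exp2m1_quot_0; lra |].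
  - assert (exp (2 * y) < 1) by (rewrite <- exp_0; apply exp_increasing; lra). nra.
  - assert (1 < exp (2 * y)) by (rewrite <- exp_0; apply exp_increasing; lra). nra.
Qed.

Lemma tanhc_pos y : 0 < tanhc y.
Proof.
  pose proof (exp2m1_quot_pos y). pose proof (exp_pos (2 * y)).
  apply Rdiv_lt_0_compat; lra.
Qed.

Lemma tanh_exp2 y : tanh y = (exp (2 * y) - 1) / (exp (2 * y) + 1).
Proof.
  unfold tanh, sinh, cosh. rewrite exp_Ropp.
  replace (2 * y) with (y + y) by ring. rewrite exp_plus.
  pose proof (exp_pos y) as He. pose proof (Rinv_0_lt_compat _ He).
  assert (0 < exp y * exp y) by nra.
  field. repeat split; lra.
Qed.

Lemma tanh_tanhc y : tanh y = y * tanhc y.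
Proof.
  unfold tanhc. rewrite tanh_exp2, <- exp2m1_quot_spec.
  pose proof (exp_pos (2 * y)). field. lra.
Qed.

Lemma tanh_opp y : tanh (- y) = - tanh y.
Proof.
  rewrite !tanh_exp2. replace (2 * - y) with (- (2 * y)) by ring. rewrite exp_Ropp.
  pose proof (exp_pos (2 * y)). field. lra.
Qed.

Lemma tanhc_opp y : tanhc (- y) = tanhc y.
Proof.
  destruct (Req_dec y 0) as [->|Hy]; [now rewrite Ropp_0|].
  apply (Rmult_eq_reg_l (- y)); [|lra].
  rewrite <- tanh_tanhc, tanh_opp, tanh_tanhc. ring.
Qed.

Lemma F_opp x : F (- x) = - F x.
Proof. unfold F. rewrite tanhc_opp. ring. Qed.

Lemma F_eq_g r : 0 <= r -> F r = g r.
Proof.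
  intros Hr. unfold g, F. rewrite tanh_tanhc.
  replace (r * (r * tanhc r)) with (r ^ 2 * tanhc r) by ring.
  rewrite sqrt_mult_alt, sqrt_pow2 by (auto using pow2_ge_0). reflexivity.
Qed.

Lemma pseries_rep_exp2 x0 :
  pseries_rep (fun y => exp (2 * y)) x0 (PS_scal (exp (2 * x0)) exp2_coef).
Proof.
  pose proof (exp_pos (2 * x0)).
  apply pseries_rep_intro with (exp (2 * x0)) 2 1; try lra.
  - intro n. unfold PS_scal, scal; simpl; unfold mult; simpl.
    rewrite Rabs_mult, Rabs_pos_eq by lra. pose proof (exp2_coef_bound n). nra.
  - intros y _. replace (2 * y) with (2 * x0 + 2 * (y - x0)) by ring.
    rewrite exp_plus, <- (is_pseries_unique _ _ _ (is_pseries_exp2 (y - x0))), PSeries_scal.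
    reflexivity.
Qed.

Lemma pseries_rep_exp2m1_quot_0 : pseries_rep exp2m1_quot 0 (fun n => exp2_coef (S n)).
Proof.
  apply pseries_rep_intro with 2 2 1; try lra.
  - intro n. pose proof (exp2_coef_bound (S n)). simpl in *. lra.
  - intros y _. rewrite Rminus_0_r. reflexivity.
Qed.

Lemma analytic_exp2m1_quot x0 : analytic_at exp2m1_quot x0.
Proof.
  destruct (Req_dec x0 0) as [->|Hx0]; [eexists; apply pseries_rep_exp2m1_quot_0|].
  eexists. apply (pseries_rep_ext_loc (fun y => (exp (2 * y) + -1) * / y)) with (d := Rabs x0).
  - apply Rabs_pos_lt, Hx0.
  - intros y Hy. assert (y <> 0) by (intros ->; rewrite Rminus_0_l, Rabs_Ropp in Hy; lra).
    apply (Rmult_eq_reg_l y); auto. rewrite exp2m1_quot_spec. field. auto.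
  - apply pseries_rep_mult.
    + apply pseries_rep_plus; [apply pseries_rep_exp2 | apply pseries_rep_const].
    + apply pseries_rep_inv; [apply pseries_rep_id | exact Hx0].
Qed.

Lemma pseries_rep_tanhc x0 a : pseries_rep exp2m1_quot x0 a ->
  pseries_rep tanhc x0
    (PS_mult a (PS_inv (PS_plus (PS_scal (exp (2 * x0)) exp2_coef) (PS_const 1)))).
Proof.
  intros Ha. apply pseries_rep_mult; [exact Ha|].
  apply pseries_rep_inv.
  - apply pseries_rep_plus; [apply pseries_rep_exp2 | apply pseries_rep_const].
  - pose proof (exp_pos (2 * x0)). lra.
Qed.

Lemma pseries_rep_F x0 a : pseries_rep tanhc x0 a ->
  pseries_rep F x0 (PS_mult (PS_id x0) (PS_sqrt a)).
Proof.
  intros Ha. apply pseries_rep_mult; [apply pseries_rep_id|].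
  apply pseries_rep_sqrt; [exact Ha | apply tanhc_pos].
Qed.

Lemma analytic_F x0 : analytic_at F x0.
Proof.
  destruct (analytic_exp2m1_quot x0) as [a Ha].
  eexists. apply pseries_rep_F, pseries_rep_tanhc, Ha.
Qed.

Definition F_coef0 : nat -> R :=
  PS_mult (PS_id 0) (PS_sqrt (PS_mult (fun n => exp2_coef (S n))
    (PS_inv (PS_plus (PS_scal (exp (2 * 0)) exp2_coef) (PS_const 1))))).

Lemma pseries_rep_F_0 : pseries_rep F 0 F_coef0.
Proof. apply pseries_rep_F, pseries_rep_tanhc, pseries_rep_exp2m1_quot_0. Qed.

Lemma F_coef0_1_3 : F_coef0 1 = 1 /\ F_coef0 3 = - 1 / 6.
Proof.
  set (d := PS_plus (PS_scal (exp (2 * 0)) exp2_coef) (PS_const 1)).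
  assert (Hd : forall n, (n <= 2)%nat -> d n = 2).
  { intros n Hn. unfold d, PS_plus, PS_scal, plus, scal; simpl; unfold mult; simpl.
    rewrite Rmult_0_r, exp_0, Rmult_1_l. unfold exp2_coef.
    destruct n as [|[|[|n]]]; [simpl; field.. | lia]. }
  set (i := PS_inv d).
  assert (Hi0 : i 0%nat = 1 / 2) by (unfold i; rewrite PS_inv_eq; simpl; rewrite Hd by lia; field).
  assert (Hi1 : i 1%nat = - 1 / 2).
  { unfold i. rewrite PS_inv_eq. cbv beta iota delta [PS_inv_step]. cbn [sum_f_R0 Nat.sub].
    fold i. rewrite !Hd, Hi0 by lia. field. }
  assert (Hi2 : i 2%nat = 0).
  { unfold i. rewrite PS_inv_eq. cbv beta iota delta [PS_inv_step]. cbn [sum_f_R0 Nat.sub].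
    fold i. rewrite !Hd, Hi0, Hi1 by lia. field. }
  set (q := PS_mult (fun n => exp2_coef (S n)) i).
  assert (Hq0 : q 0%nat = 1) by (unfold q, PS_mult, exp2_coef; simpl; rewrite Hi0; field).
  assert (Hq1 : q 1%nat = 0) by (unfold q, PS_mult, exp2_coef; simpl; rewrite Hi0, Hi1; field).
  assert (Hq2 : q 2%nat = - 1 / 3)
    by (unfold q, PS_mult, exp2_coef; simpl; rewrite Hi0, Hi1, Hi2; field).
  set (s := PS_sqrt q).
  assert (Hs0 : s 0%nat = 1) by (unfold s; rewrite PS_sqrt_eq; simpl; rewrite Hq0; apply sqrt_1).
  assert (Hs1 : s 1%nat = 0).
  { unfold s. rewrite PS_sqrt_eq. cbv beta iota delta [PS_sqrt_step].
    cbn [sum_f_R0 PS_nonconst Nat.sub]. rewrite Hq0, Hq1, sqrt_1. field. }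
  assert (Hs2 : s 2%nat = - 1 / 6).
  { unfold s. rewrite PS_sqrt_eq. cbv beta iota delta [PS_sqrt_step].
    cbn [sum_f_R0 PS_nonconst Nat.sub]. fold s. rewrite Hq0, Hq2, Hs1, sqrt_1. field. }
  unfold F_coef0. fold d i q s. unfold PS_mult. simpl. rewrite Hs0, Hs2. split; ring.
Qed.

(** * Derivatives of [F] *)

Definition ytanh (y : R) : R := y * tanh y.
Definition ytanh_d1 (y : R) : R := tanh y + y * (1 - tanh y ^ 2).
Definition ytanh_d2 (y : R) : R := 2 * (1 - tanh y ^ 2) - 2 * y * tanh y * (1 - tanh y ^ 2).

Lemma is_derive_ytanh y : is_derive ytanh y (ytanh_d1 y).
Proof.
  unfold ytanh, ytanh_d1. rewrite tanh_exp2.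
  apply is_derive_ext with (fun t => t * ((exp (2 * t) - 1) / (exp (2 * t) + 1))).
  { intro t. rewrite tanh_exp2. reflexivity. }
  pose proof (exp_pos (2 * y)). auto_derive; [lra | field; lra].
Qed.

Lemma is_derive_ytanh_d1 y : is_derive ytanh_d1 y (ytanh_d2 y).
Proof.
  unfold ytanh_d1, ytanh_d2. rewrite tanh_exp2.
  apply is_derive_ext with (fun t => (exp (2 * t) - 1) / (exp (2 * t) + 1)
                                     + t * (1 - ((exp (2 * t) - 1) / (exp (2 * t) + 1)) ^ 2)).
  { intro t. rewrite tanh_exp2. reflexivity. }
  pose proof (exp_pos (2 * y)). auto_derive; [lra | field; lra].
Qed.

Lemma tanh_bounds y : -1 < tanh y < 1.
Proof.
  rewrite tanh_exp2. pose proof (exp_pos (2 * y)).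
  split; [apply Rlt_div_r | apply Rlt_div_l]; lra.
Qed.

Lemma ytanh_pos y : y <> 0 -> 0 < ytanh y.
Proof.
  intros Hy. unfold ytanh. rewrite tanh_tanhc. pose proof (tanhc_pos y).
  assert (0 < y * y) by (destruct (Rtotal_order y 0) as [|[|]]; [nra | contradiction | nra]).
  nra.
Qed.

Lemma ytanh_d1_pos y : 0 < y -> 0 < ytanh_d1 y.
Proof.
  intros Hy. unfold ytanh_d1. pose proof (tanh_bounds y).
  assert (0 < tanh y) by (rewrite tanh_tanhc; pose proof (tanhc_pos y); nra).
  assert (0 < y * (1 - tanh y ^ 2)) by (apply Rmult_lt_0_compat; nra).
  lra.
Qed.

(* 2 P P'' - P'^2 = -((T - y S)^2 + 4 P^2 S) with T = tanh y, S = 1 - T^2, P = y T. *)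
Lemma ytanh_sqrt_concavity y : y <> 0 -> 2 * ytanh y * ytanh_d2 y - ytanh_d1 y ^ 2 < 0.
Proof.
  intros Hy. pose proof (tanh_bounds y). pose proof (ytanh_pos y Hy) as HP.
  unfold ytanh, ytanh_d1, ytanh_d2 in *.
  pose proof (pow2_ge_0 (tanh y - y * (1 - tanh y ^ 2))).
  assert (0 < (y * tanh y) ^ 2 * (1 - tanh y ^ 2)) by (apply Rmult_lt_0_compat; nra).
  nra.
Qed.

Lemma Derive_F_pos_half_line x : 0 < x -> Derive F x = ytanh_d1 x / (2 * sqrt (ytanh x)).
Proof.
  intros Hx. apply is_derive_unique, is_derive_ext_loc with (fun t => sqrt (ytanh t)).
  - apply (filter_imp (fun t => 0 < t)); [|apply (open_gt 0 x Hx)].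
    intros t Ht. symmetry. apply F_eq_g. lra.
  - apply is_derive_sqrt; [apply is_derive_ytanh | apply ytanh_pos; lra].
Qed.

Lemma is_derive_Derive_F_pos_half_line x : 0 < x ->
  is_derive (Derive F) x
    ((2 * ytanh x * ytanh_d2 x - ytanh_d1 x ^ 2) / (4 * ytanh x * sqrt (ytanh x))).
Proof.
  intros Hx. apply is_derive_ext_loc with (fun t => ytanh_d1 t / (2 * sqrt (ytanh t))).
  - apply (filter_imp (fun t => 0 < t)); [|apply (open_gt 0 x Hx)].
    intros t Ht. symmetry. apply Derive_F_pos_half_line, Ht.
  - apply is_derive_sqrt_deriv;
      [apply is_derive_ytanh | apply is_derive_ytanh_d1 | apply ytanh_pos; lra].
Qed.

Lemma F_smooth n x : ex_derive_n F n x.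
Proof. destruct (analytic_F x) as [a Ha]. apply (pseries_rep_Derive_n _ _ _ Ha). Qed.

Lemma F_Derive_n_0 n : Derive_n F n 0 = F_coef0 n * INR (Factorial.fact n).
Proof. apply (pseries_rep_Derive_n _ _ _ pseries_rep_F_0). Qed.

Lemma Derive_F_opp x : Derive F (- x) = Derive F x.
Proof.
  change (Derive_n F 1 (- x) = Derive_n F 1 x).
  rewrite Derive_n_odd by (apply F_opp || apply F_smooth). ring.
Qed.

Lemma Derive2_F_opp x : Derive_n F 2 (- x) = - Derive_n F 2 x.
Proof. rewrite Derive_n_odd by (apply F_opp || apply F_smooth). ring. Qed.

Lemma Derive_F_pos x : 0 < Derive F x.
Proof.
  assert (Hpos : forall y, 0 < y -> 0 < Derive F y).
  { intros y Hy. rewrite Derive_F_pos_half_line by exact Hy.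
    pose proof (sqrt_lt_R0 _ (ytanh_pos y ltac:(lra))). pose proof (ytanh_d1_pos y Hy).
    apply Rdiv_lt_0_compat; lra. }
  destruct (Rtotal_order x 0) as [Hx|[->|Hx]]; auto.
  - rewrite <- (Ropp_involutive x), Derive_F_opp. apply Hpos. lra.
  - change (Derive F 0) with (Derive_n F 1 0).
    rewrite F_Derive_n_0, (proj1 F_coef0_1_3). simpl. lra.
Qed.

Lemma Derive2_F_neg x : 0 < x -> Derive_n F 2 x < 0.
Proof.
  intros Hx. change (Derive_n F 2 x) with (Derive (Derive F) x).
  rewrite (is_derive_unique _ _ _ (is_derive_Derive_F_pos_half_line x Hx)).
  pose proof (ytanh_pos x ltac:(lra)) as HP. pose proof (sqrt_lt_R0 _ HP).
  pose proof (ytanh_sqrt_concavity x ltac:(lra)).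
  apply Rdiv_neg_pos; [lra | nra].
Qed.

Lemma Derive2_F_0 : Derive_n F 2 0 = 0.
Proof. pose proof (Derive2_F_opp 0) as Hodd. rewrite Ropp_0 in Hodd. lra. Qed.

Lemma Derive2_F_eq_0 x : Derive_n F 2 x = 0 <-> x = 0.
Proof.
  split; [|intros ->; apply Derive2_F_0].
  intros H0. destruct (Rtotal_order x 0) as [Hx|[Hx|Hx]]; auto.
  - pose proof (Derive2_F_neg (- x) ltac:(lra)) as Hneg. rewrite Derive2_F_opp in Hneg. lra.
  - pose proof (Derive2_F_neg x Hx). lra.
Qed.

Lemma Derive3_F_0 : Derive_n F 3 0 = -1.
Proof. rewrite F_Derive_n_0, (proj2 F_coef0_1_3). simpl. field. Qed.

Lemma F_concave : concave_on (fun r => 0 <= r) F.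
Proof.
  apply concave_of_Derive_nonincreasing.
  - intros x _. apply (F_smooth 1).
  - apply nonincreasing_of_Derive_nonpos.
    + intros x _. apply (F_smooth 2).
    + intros x Hx. change (Derive (Derive F) x) with (Derive_n F 2 x).
      destruct (Req_dec x 0) as [->|Hx0]; [rewrite Derive2_F_0; lra|].
      apply Rlt_le, Derive2_F_neg. lra.
Qed.

Theorem lemma3p2 :
  concave_on (fun r => 0 <= r) g /\
  exists F : R -> R,
    (forall r : R, 0 <= r -> F r = g r) /\
    real_analytic F /\
    (forall x y : R, x < y -> F x < F y) /\
    (forall x : R, F (- x) = - F x) /\
    (forall x : R, Derive F x <> 0) /\
    (forall x : R, Derive_n F 2 x = 0 <-> x = 0) /\
    Derive_n F 3 0 <> 0.
Proof.
  split.
  - intros x y t Hx Hy Ht.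
    assert (0 <= t * x + (1 - t) * y) by nra.
    rewrite <- !F_eq_g by auto. apply F_concave; auto.
  - exists F. repeat split.
    + apply F_eq_g.
    + apply real_analytic_intro, analytic_F.
    + apply increasing_of_Derive_pos; [apply (F_smooth 1) | apply Derive_F_pos].
    + apply F_opp.
    + intro x. pose proof (Derive_F_pos x). lra.
    + apply Derive2_F_eq_0.
    + apply Derive2_F_eq_0.
    + rewrite Derive3_F_0. lra.
Qed.
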